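(* Let $b\ge2$, $k\in\mathbb{N}$, let $A$ be a nonempty subset of $\{0,1,\ldots,k\}$, and let $f\in\mathcal{M}^b$ have set-array representation $(A,\emptyset,\ldots,\emptyset)$. Then $d(f)\le d([k]_b)$, and the inequality is strict for $f\neq[k]_b$.
   Context: $\mathbb{N}=\{0,1,\ldots\}$, $[k]=\{0,\ldots,k\}$. $\mathcal{M}^b$ is the set of finitely supported functions $f:\mathbb{N}\to\{0,\ldots,b\}$ (finite multisets with multiplicities at most $b$); its set-array representation is $(A_1,\ldots,A_b)$ with $A_i=\{a:f(a)\ge i\}$. Multiset addition is coordinatewise on set arrays: $(A_i)_i+(B_i)_i=(A_i+B_i)_i$ with $S+T=\{s+t:s\in S,t\in T\}$ and $S+\emptyset=\emptyset$. $g$ is a divisor of $f$ if $f=g+h$ for some $h\in\mathcal{M}^b$; $d(f)$ is the number of divisors of $f$. $[k]_b$ is the multiset with set-array representation $([k],\emptyset,\ldots,\emptyset)$. *)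

From Stdlib Require Import Arith List Lia.
Import ListNotations.

(* A multiset in M^b: finitely supported f : nat -> {0,...,b}. *)
Definition inMb (b : nat) (f : nat -> nat) : Prop :=
  (forall a, f a <= b) /\ exists N, forall a, N <= a -> f a = 0.

(* The i-th set of the set-array representation: A_i = {a | f a >= i}. *)
Definition level (f : nat -> nat) (i : nat) : nat -> Prop :=
  fun a => i <= f a.

Definition sumset (S T : nat -> Prop) : nat -> Prop :=
  fun a => exists s t, S s /\ T t /\ a = s + t.

(* f = g + h in M^b: coordinatewise sum of the set arrays (A_1..A_b). *)
Definition is_msum (b : nat) (g h f : nat -> nat) : Prop :=
  forall i, 1 <= i <= b ->
    forall a, level f i a <-> sumset (level g i) (level h i) a.

Definition mdivisor (b : nat) (g f : nat -> nat) : Prop :=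
  inMb b g /\ exists h, inMb b h /\ is_msum b g h f.

Definition card_is (P : (nat -> nat) -> Prop) (n : nat) : Prop :=
  exists l : list (nat -> nat), NoDup l /\ length l = n /\
    forall g, P g <-> In g l.

Definition num_divisors_is (b : nat) (f : nat -> nat) (n : nat) : Prop :=
  card_is (fun g => mdivisor b g f) n.

(* [k]_b : set-array representation ([k], empty, ..., empty). *)
Definition intvl_b (k : nat) : nat -> nat :=
  fun a => if a <=? k then 1 else 0.

From Stdlib Require Import Arith List Lia.
From Stdlib Require Import ClassicalEpsilon FunctionalExtensionality.
Import ListNotations.

(* Since f is 0/1-valued, only level 1 constrains a divisor g: its support S must satisfy
   S + T = A for some T, and the cofactor can be taken 0/1-valued.
   If 0 is in A, then S is contained in A, and replacing each element of S by its rank in A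
   turns g into a divisor of [k]_b; this map is injective, and [k]_b is in its image only
   when A = [k].
   If 0 is not in A, a divisor g with 0 in S is a divisor of A - 1 (the cofactor avoids 0),
   and otherwise g shifted down by one is; hence d(f) <= 2 d(A - 1).  Conversely each
   divisor of [k]_b, extended by the value 1 or 2 just above the top of its support, gives
   two distinct divisors of [k+1]_b, none of which is the indicator of {0}; hence
   2 d([k]_b) < d([k+1]_b).  Induction on k combines the two. *)

Definition has_card {T : Type} (P : T -> Prop) (n : nat) : Prop :=
  exists l : list T, NoDup l /\ length l = n /\ forall x, P x <-> In x l.

Section Cardinality.

Variables (T U : Type) (P : T -> Prop) (Q : U -> Prop) (phi : T -> U).
Hypothesis phi_maps : forall x, P x -> Q (phi x).
Hypothesis phi_inj : forall x y, P x -> P y -> phi x = phi y -> x = y.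

Lemma NoDup_map_enum (l : list T) :
  NoDup l -> (forall x, P x <-> In x l) -> NoDup (map phi l).
Proof.
  intros Hnd HP. apply NoDup_map_NoDup_ForallPairs; [|exact Hnd].
  intros x y Hx Hy. apply phi_inj; apply HP; assumption.
Qed.

Lemma has_card_le_inj n m : has_card P n -> has_card Q m -> n <= m.
Proof.
  intros [lP [HndP [<- HP]]] [lQ [HndQ [<- HQ]]].
  rewrite <- (length_map phi lP). apply NoDup_incl_length.
  - apply NoDup_map_enum; assumption.
  - intros y Hy. apply in_map_iff in Hy as [x [<- Hx]]. apply HQ, phi_maps, HP, Hx.
Qed.

Lemma has_card_lt_inj n m :
  has_card P n -> has_card Q m -> (exists y, Q y /\ forall x, P x -> phi x <> y) -> n < m.
Proof.
  intros [lP [HndP [<- HP]]] [lQ [HndQ [<- HQ]]] [y [Qy Hy]].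
  rewrite <- (length_map phi lP). change (length (y :: map phi lP) <= length lQ).
  apply NoDup_incl_length.
  - apply NoDup_cons; [|apply NoDup_map_enum; assumption].
    intros Hin. apply in_map_iff in Hin as [x [Hxy Hx]]. exact (Hy x (proj2 (HP x) Hx) Hxy).
  - intros z [<- | Hz]; [apply HQ, Qy|].
    apply in_map_iff in Hz as [x [<- Hx]]. apply HQ, phi_maps, HP, Hx.
Qed.

End Cardinality.

Lemma has_card_pair {T : Type} (P : T -> Prop) n :
  has_card P n -> has_card (fun p : T * bool => P (fst p)) (2 * n).
Proof.
  intros [l [Hnd [<- HP]]].
  exists (map (fun x => (x, true)) l ++ map (fun x => (x, false)) l). split; [|split].
  - apply NoDup_app.
    + apply NoDup_map_NoDup_ForallPairs; [intros x y _ _ E; congruence | exact Hnd].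
    + apply NoDup_map_NoDup_ForallPairs; [intros x y _ _ E; congruence | exact Hnd].
    + intros p Ht Hf. apply in_map_iff in Ht as [x [<- _]].
      apply in_map_iff in Hf as [y [E _]]. discriminate.
  - rewrite length_app, !length_map. lia.
  - intros [x [|]]; simpl; rewrite in_app_iff, !in_map_iff, HP; split.
    + intros Hx. left. exists x. auto.
    + intros [[y [E Hy]] | [y [E Hy]]]; congruence.
    + intros Hx. right. exists x. auto.
    + intros [[y [E Hy]] | [y [E Hy]]]; congruence.
Qed.

Lemma has_card_of_incl {T : Type} (P : T -> Prop) (l : list T) :
  (forall x, P x -> In x l) -> exists n, has_card P n.
Proof.
  intros Hl.
  set (dec := fun x y : T => excluded_middle_informative (x = y)).
  set (p := fun x => if excluded_middle_informative (P x) then true else false).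
  exists (length (nodup dec (filter p l))), (nodup dec (filter p l)).
  split; [apply NoDup_nodup | split; [reflexivity|]].
  intros x. rewrite nodup_In, filter_In. unfold p.
  destruct (excluded_middle_informative (P x)) as [Hx|Hx]; split.
  - intros HPx. split; [apply Hl, HPx | reflexivity].
  - intros _. exact Hx.
  - intros HPx. contradiction.
  - intros [_ E]. discriminate.
Qed.

Lemma bounded_funs_enum (b n : nat) :
  exists l : list (nat -> nat),
    forall g, (forall a, g a <= b) -> (forall a, n <= a -> g a = 0) -> In g l.
Proof.
  induction n as [|n [l Hl]].
  - exists [fun _ => 0]. intros g _ Hz. left.
    apply functional_extensionality. intros a. symmetry. apply Hz. lia.
  - exists (flat_map (fun g => map (fun v a => if a =? n then v else g a) (seq 0 (S b))) l).
    intros g Hb Hz. apply in_flat_map. exists (fun a => if a =? n then 0 else g a). split.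
    + apply Hl.
      * intros a. destruct (a =? n); [lia | apply Hb].
      * intros a Ha. destruct (Nat.eqb_spec a n); [reflexivity|]. apply Hz. lia.
    + apply in_map_iff. exists (g n). split.
      * apply functional_extensionality. intros a. destruct (Nat.eqb_spec a n); congruence.
      * apply in_seq. specialize (Hb n). lia.
Qed.

Definition level1_msum (g h f : nat -> nat) : Prop :=
  forall a, level f 1 a <-> sumset (level g 1) (level h 1) a.

Lemma mdivisor_level1 b g f :
  1 <= b -> mdivisor b g f -> inMb b g /\ exists h, inMb b h /\ level1_msum g h f.
Proof.
  intros Hb [Hg [h [Hh Hs]]]. split; [exact Hg|]. exists h. split; [exact Hh|].
  exact (Hs 1 (conj (le_n 1) Hb)).
Qed.

Lemma mdivisor_of_level1 b g h f :
  (forall a, f a <= 1) -> inMb b g -> inMb b h -> level1_msum g h f -> mdivisor b g f.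
Proof.
  intros Hf Hg [Hhb [N HN]] Hs. split; [exact Hg|].
  (* Truncating the cofactor to values <= 1 empties all its levels >= 2, as for f. *)
  exists (fun t => min (h t) 1). split.
  - split; [intros t; specialize (Hhb t); lia|].
    exists N. intros t Ht. rewrite HN; auto.
  - intros i Hi a. destruct (Nat.eq_dec i 1) as [->|Hi1].
    + rewrite (Hs a). unfold level, sumset.
      split; intros [s [t [Hgs [Hht E]]]]; exists s, t; repeat split; auto; lia.
    + unfold level, sumset. split.
      * intros Hfa. specialize (Hf a). lia.
      * intros [s [t [_ [Hht _]]]]. lia.
Qed.

Lemma mdivisor_supp_le b f g k :
  1 <= b -> (forall a, 1 <= f a -> a <= k) -> (exists a, 1 <= f a) ->
  mdivisor b g f -> forall a, 1 <= g a -> a <= k.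
Proof.
  intros Hb Hfk [a0 Ha0] Hg a Ha.
  destruct (mdivisor_level1 b g f Hb Hg) as [_ [h [_ Hs]]].
  destruct (proj1 (Hs a0) Ha0) as [s [t [_ [Ht _]]]].
  assert (Hat : 1 <= f (a + t)) by (apply Hs; exists a, t; auto).
  specialize (Hfk _ Hat). lia.
Qed.

Lemma mdivisor_supp_zero b f g :
  1 <= b -> 1 <= f 0 -> mdivisor b g f -> 1 <= g 0 /\ forall a, 1 <= g a -> 1 <= f a.
Proof.
  intros Hb Hf0 Hg. destruct (mdivisor_level1 b g f Hb Hg) as [_ [h [_ Hs]]].
  destruct (proj1 (Hs 0) Hf0) as [s [t [Hgs [Hht E]]]].
  assert (s = 0 /\ t = 0) as [-> ->] by lia.
  split; [exact Hgs|]. intros a Ha. apply Hs. exists a, 0. repeat split; auto; lia.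
Qed.

Lemma num_divisors_exists b f k :
  1 <= b -> (forall a, 1 <= f a -> a <= k) -> (exists a, 1 <= f a) ->
  exists n, num_divisors_is b f n.
Proof.
  intros Hb Hfk Hne. destruct (bounded_funs_enum b (S k)) as [l Hl].
  apply (has_card_of_incl _ l). intros g Hg. apply Hl.
  - apply (proj1 (proj1 Hg)).
  - intros a Ha. destruct (Nat.eq_dec (g a) 0) as [|Hga]; [assumption|].
    enough (a <= k) by lia. apply (mdivisor_supp_le b f g k); auto. lia.
Qed.

Lemma intvl_b_pos k a : 1 <= intvl_b k a <-> a <= k.
Proof. unfold intvl_b. destruct (Nat.leb_spec a k); split; intros; lia. Qed.

Lemma intvl_b_le1 k a : intvl_b k a <= 1.
Proof. unfold intvl_b. destruct (a <=? k); lia. Qed.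

Lemma mdivisor_intvl_of_cover b k G :
  1 <= b -> (forall a, G a <= b) -> (forall a, 1 <= G a -> a <= k) ->
  (forall x, x <= k -> exists s t, 1 <= G s /\ x = s + t /\
                                   forall s', 1 <= G s' -> s' + t <= k) ->
  mdivisor b G (intvl_b k).
Proof.
  intros Hb HGb HGk Hcov.
  set (admissible := fun t => t <= k /\ forall s', 1 <= G s' -> s' + t <= k).
  set (h := fun t => if excluded_middle_informative (admissible t) then 1 else 0).
  apply (mdivisor_of_level1 b G h); [apply intvl_b_le1 | | |].
  - split; [exact HGb|]. exists (S k). intros a Ha.
    destruct (Nat.eq_dec (G a) 0) as [|HGa]; [assumption|]. specialize (HGk a). lia.
  - split.
    + intros t. unfold h. destruct excluded_middle_informative; lia.
    + exists (S k). intros t Ht. unfold h.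
      destruct excluded_middle_informative as [[Htk _]|]; [lia | reflexivity].
  - intros a. unfold level, sumset. rewrite intvl_b_pos. split.
    + intros Ha. destruct (Hcov a Ha) as [s [t [HGs [-> Ht]]]]. exists s, t.
      split; [exact HGs|]. split; [|reflexivity]. unfold h.
      destruct excluded_middle_informative as [|Hna]; [lia|].
      exfalso. apply Hna. split; [lia | exact Ht].
    + intros [s [t [HGs [Hht ->]]]]. unfold h in Hht.
      destruct excluded_middle_informative as [[_ Ht]|]; [apply Ht, HGs | lia].
Qed.

Fixpoint max_supp (g : nat -> nat) (n : nat) : nat :=
  match n with
  | 0 => 0
  | S n' => if 1 <=? g (S n') then S n' else max_supp g n'
  end.

Lemma max_supp_le g n : max_supp g n <= n.
Proof. induction n as [|n IH]; cbn [max_supp]; [lia|]. destruct (1 <=? g (S n)); lia. Qed.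

Lemma max_supp_spec g n :
  1 <= g 0 -> 1 <= g (max_supp g n) /\ forall a, 1 <= g a -> a <= n -> a <= max_supp g n.
Proof.
  intros Hg0. induction n as [|n [IHpos IHmax]]; cbn [max_supp].
  - split; [exact Hg0 | intros a _ Ha; exact Ha].
  - destruct (Nat.leb_spec 1 (g (S n))) as [Hn|Hn].
    + split; [exact Hn | intros a _ Ha; exact Ha].
    + split; [exact IHpos|]. intros a Ha Han.
      destruct (Nat.eq_dec a (S n)) as [->|]; [lia|]. apply IHmax; [exact Ha | lia].
Qed.

Lemma mdivisor_intvl_facts b k g :
  1 <= b -> mdivisor b g (intvl_b k) ->
  (forall a, g a <= b) /\ 1 <= g 0 /\ (forall a, 1 <= g a -> a <= k) /\
  exists h, level1_msum g h (intvl_b k).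
Proof.
  intros Hb Hg. assert (H0k : 1 <= intvl_b k 0) by (apply intvl_b_pos; lia).
  destruct (mdivisor_level1 b g _ Hb Hg) as [[Hgb _] [h [_ Hs]]].
  split; [exact Hgb|]. split; [exact (proj1 (mdivisor_supp_zero b _ g Hb H0k Hg))|].
  split; [|exists h; exact Hs].
  apply (mdivisor_supp_le b (intvl_b k)); [exact Hb | intros a; apply intvl_b_pos | | exact Hg].
  exists 0. exact H0k.
Qed.

Definition extend_top (g : nat -> nat) (k : nat) (t : bool) : nat -> nat :=
  fun a => if a =? S (max_supp g k) then (if t then 1 else 2) else g a.

Lemma extend_top_mdivisor b k g t :
  2 <= b -> mdivisor b g (intvl_b k) -> mdivisor b (extend_top g k t) (intvl_b (S k)).
Proof.
  intros Hb Hg.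
  destruct (mdivisor_intvl_facts b k g ltac:(lia) Hg) as [Hgb [Hg0 [Hgk [h Hs]]]].
  assert (Hsum : forall s r, 1 <= g s -> 1 <= h r -> s + r <= k).
  { intros s r Hgs Hr. apply intvl_b_pos, Hs. exists s, r. auto. }
  destruct (max_supp_spec g k Hg0) as [Hu Humax].
  assert (Huk := max_supp_le g k).
  unfold extend_top. set (u := max_supp g k) in *.
  apply mdivisor_intvl_of_cover; [lia | | |].
  - intros a. destruct (a =? S u); [destruct t|]; [lia | lia | apply Hgb].
  - intros a. destruct (Nat.eqb_spec a (S u)); [lia|]. intros Ha. specialize (Hgk a Ha). lia.
  - intros x Hx. destruct (le_lt_dec (S u) x).
    + exists (S u), (x - S u). rewrite Nat.eqb_refl. split; [destruct t; lia|]. split; [lia|].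
      intros s' Hs'. destruct (Nat.eqb_spec s' (S u)); [lia|].
      specialize (Humax s' Hs' (Hgk s' Hs')). lia.
    + destruct (proj1 (Hs x)) as [s [tau [Hgs [Htau ->]]]]; [apply intvl_b_pos; lia|].
      exists s, tau. destruct (Nat.eqb_spec s (S u)); [lia|]. split; [exact Hgs|].
      split; [reflexivity|]. intros s' Hs'. destruct (Nat.eqb_spec s' (S u)) as [E|].
      * rewrite E. specialize (Hsum u tau Hu Htau). lia.
      * specialize (Hsum s' tau Hs' Htau). lia.
Qed.

Lemma extend_top_inj b k g1 g2 t1 t2 :
  1 <= b -> mdivisor b g1 (intvl_b k) -> mdivisor b g2 (intvl_b k) ->
  extend_top g1 k t1 = extend_top g2 k t2 -> g1 = g2 /\ t1 = t2.
Proof.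
  intros Hb Hg1 Hg2 E.
  destruct (mdivisor_intvl_facts b k g1 Hb Hg1) as [_ [Hg10 [Hg1k _]]].
  destruct (mdivisor_intvl_facts b k g2 Hb Hg2) as [_ [Hg20 [Hg2k _]]].
  destruct (max_supp_spec g1 k Hg10) as [_ Hmax1].
  destruct (max_supp_spec g2 k Hg20) as [_ Hmax2].
  unfold extend_top in E. set (u1 := max_supp g1 k) in *. set (u2 := max_supp g2 k) in *.
  (* The new top element S u_i is the maximum of the support of the extension. *)
  assert (Eu : u1 = u2).
  { destruct (Nat.lt_trichotomy u1 u2) as [Hlt|[Heq|Hlt]]; [exfalso | exact Heq | exfalso].
    - pose proof (equal_f E (S u2)) as E2. cbv beta in E2. rewrite Nat.eqb_refl in E2.
      destruct (Nat.eqb_spec (S u2) (S u1)); [lia|].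
      assert (H1 : 1 <= g1 (S u2)) by (rewrite E2; destruct t2; lia).
      specialize (Hmax1 _ H1 (Hg1k _ H1)). lia.
    - pose proof (equal_f E (S u1)) as E2. cbv beta in E2. rewrite Nat.eqb_refl in E2.
      destruct (Nat.eqb_spec (S u1) (S u2)); [lia|].
      assert (H2 : 1 <= g2 (S u1)) by (rewrite <- E2; destruct t1; lia).
      specialize (Hmax2 _ H2 (Hg2k _ H2)). lia. }
  rewrite <- Eu in E.
  assert (Et : t1 = t2).
  { pose proof (equal_f E (S u1)) as E2. cbv beta in E2. rewrite Nat.eqb_refl in E2.
    destruct t1, t2; congruence. }
  split; [|exact Et].
  apply functional_extensionality. intros a. pose proof (equal_f E a) as Ea. cbv beta in Ea.
  destruct (Nat.eqb_spec a (S u1)) as [Ha|]; [rewrite Ha | exact Ea].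
  destruct (Nat.eq_dec (g1 (S u1)) 0) as [Z1|Z1];
    [|specialize (Hmax1 (S u1) ltac:(lia) (Hg1k (S u1) ltac:(lia))); lia].
  destruct (Nat.eq_dec (g2 (S u1)) 0) as [Z2|Z2];
    [|specialize (Hmax2 (S u1) ltac:(lia) (Hg2k (S u1) ltac:(lia))); lia].
  congruence.
Qed.

Lemma num_divisors_intvl_S b k m1 m2 :
  2 <= b -> num_divisors_is b (intvl_b k) m1 -> num_divisors_is b (intvl_b (S k)) m2 ->
  2 * m1 < m2.
Proof.
  intros Hb Hm1 Hm2.
  set (delta0 := fun a => if a =? 0 then 1 else 0).
  apply (has_card_lt_inj _ _ (fun p => mdivisor b (fst p) (intvl_b k))
           (fun g => mdivisor b g (intvl_b (S k))) (fun p => extend_top (fst p) k (snd p))).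
  - intros [g t] Hg. apply extend_top_mdivisor; assumption.
  - intros [g1 t1] [g2 t2] Hg1 Hg2 E. simpl in *.
    destruct (extend_top_inj b k g1 g2 t1 t2 ltac:(lia) Hg1 Hg2 E) as [-> ->]. reflexivity.
  - apply (has_card_pair (fun g => mdivisor b g (intvl_b k))). exact Hm1.
  - exact Hm2.
  - exists delta0. split.
    + apply mdivisor_intvl_of_cover; [lia | | |].
      * intros a. unfold delta0. destruct (a =? 0); lia.
      * intros a. unfold delta0. destruct (Nat.eqb_spec a 0); lia.
      * intros x Hx. exists 0, x. unfold delta0. split; [simpl; lia|]. split; [reflexivity|].
        intros s' Hs'. destruct (Nat.eqb_spec s' 0); lia.
    + intros [g t] _ E. pose proof (equal_f E (S (max_supp g k))) as E1.
      unfold extend_top, delta0 in E1. simpl in E1. rewrite Nat.eqb_refl in E1.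
      destruct t; discriminate.
Qed.

Lemma inMb_shift b g : inMb b g -> inMb b (fun a => g (S a)).
Proof.
  intros [Hgb [N HN]]. split; [intros a; apply Hgb|]. exists N. intros a Ha. apply HN. lia.
Qed.

Lemma mdivisor_shift_cofactor b f g :
  1 <= b -> (forall a, f a <= 1) -> f 0 = 0 -> mdivisor b g f -> 1 <= g 0 ->
  mdivisor b g (fun a => f (S a)).
Proof.
  intros Hb Hf Hf0 Hg Hg0. destruct (mdivisor_level1 b g f Hb Hg) as [Hgm [h [Hhm Hs]]].
  apply (mdivisor_of_level1 b g (fun t => h (S t))); [intros a; apply Hf | exact Hgm | |].
  - apply inMb_shift, Hhm.
  - intros a. rewrite (Hs (S a)). unfold level, sumset. split.
    + intros [s [[|t] [Hgs [Hht E]]]].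
      * (* 0 is in both supports, so 0 + 0 would lie in the support of f *)
        exfalso. enough (1 <= f 0) by lia. apply Hs. exists 0, 0. auto.
      * exists s, t. repeat split; auto. lia.
    + intros [s [t [Hgs [Hht E]]]]. exists s, (S t). repeat split; auto. lia.
Qed.

Lemma mdivisor_shift b f g :
  1 <= b -> (forall a, f a <= 1) -> mdivisor b g f -> g 0 = 0 ->
  mdivisor b (fun a => g (S a)) (fun a => f (S a)).
Proof.
  intros Hb Hf Hg Hg0. destruct (mdivisor_level1 b g f Hb Hg) as [Hgm [h [Hhm Hs]]].
  apply (mdivisor_of_level1 b _ h); [intros a; apply Hf | apply inMb_shift, Hgm | exact Hhm |].
  intros a. rewrite (Hs (S a)). unfold level, sumset. split.
  - intros [[|s] [t [Hgs [Hht E]]]]; [lia|]. exists s, t. repeat split; auto.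
  - intros [s [t [Hgs [Hht E]]]]. exists (S s), t. repeat split; auto. lia.
Qed.

Lemma num_divisors_le_double_shift b f n n' :
  1 <= b -> (forall a, f a <= 1) -> f 0 = 0 ->
  num_divisors_is b f n -> num_divisors_is b (fun a => f (S a)) n' -> n <= 2 * n'.
Proof.
  intros Hb Hf Hf0 Hn Hn'.
  apply (has_card_le_inj _ _ (fun g => mdivisor b g f)
           (fun p => mdivisor b (fst p) (fun a => f (S a)))
           (fun g => if 1 <=? g 0 then (g, true) else (fun a => g (S a), false))).
  - intros g Hg. destruct (Nat.leb_spec 1 (g 0)); simpl.
    + apply mdivisor_shift_cofactor; assumption.
    + apply mdivisor_shift; [assumption | assumption | assumption | lia].
  - intros g1 g2 _ _ E.
    destruct (Nat.leb_spec 1 (g1 0)), (Nat.leb_spec 1 (g2 0)); inversion E as [E']; [reflexivity|].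
    apply functional_extensionality. intros [|a]; [lia | exact (equal_f E' a)].
  - exact Hn.
  - apply (has_card_pair (fun g => mdivisor b g (fun a => f (S a)))). exact Hn'.
Qed.

Lemma increasing_enum (p : nat -> bool) n :
  exists len sel,
    (forall i j, i < j < len -> sel i < sel j) /\
    (forall i, i < len -> p (sel i) = true /\ sel i < n) /\
    (forall a, a < n -> p a = true -> exists i, i < len /\ sel i = a).
Proof.
  induction n as [|n [len [sel [Hincr [Hp Hcov]]]]].
  - exists 0, (fun i => i). split; [lia|]. split; lia.
  - destruct (p n) eqn:Hpn.
    + exists (S len), (fun i => if i <? len then sel i else n). split; [|split].
      * intros i j Hij. destruct (Nat.ltb_spec i len), (Nat.ltb_spec j len).
        -- apply Hincr. lia.
        -- specialize (Hp i ltac:(lia)). lia.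
        -- lia.
        -- lia.
      * intros i Hi. destruct (Nat.ltb_spec i len).
        -- specialize (Hp i ltac:(lia)). split; [apply Hp | lia].
        -- split; [exact Hpn | lia].
      * intros a Ha Hpa. destruct (Nat.eq_dec a n) as [->|].
        -- exists len. rewrite Nat.ltb_irrefl. split; [lia | reflexivity].
        -- destruct (Hcov a ltac:(lia) Hpa) as [i [Hi <-]]. exists i.
           split; [lia|]. destruct (Nat.ltb_spec i len); [reflexivity | lia].
    + exists len, sel. split; [exact Hincr|]. split.
      * intros i Hi. specialize (Hp i Hi). split; [apply Hp | lia].
      * intros a Ha Hpa. destruct (Nat.eq_dec a n) as [->|]; [congruence|].
        apply Hcov; [lia | exact Hpa].
Qed.

Section RankCompression.

Variables (b k len : nat) (f sel : nat -> nat).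
Hypotheses (Hb : 1 <= b) (Hf01 : forall a, f a <= 1) (Hfk : forall a, 1 <= f a -> a <= k)
  (Hf0 : 1 <= f 0).
Hypothesis sel_incr : forall i j, i < j < len -> sel i < sel j.
Hypothesis sel_supp : forall i, i < len -> 1 <= f (sel i).
Hypothesis supp_sel : forall a, 1 <= f a -> exists i, i < len /\ sel i = a.

Lemma sel_gap i j : i <= j < len -> sel i + (j - i) <= sel j.
Proof.
  intros [Hij Hj]. induction j as [|j IH].
  - replace i with 0 by lia. lia.
  - destruct (Nat.eq_dec i (S j)) as [->|]; [lia|].
    specialize (IH ltac:(lia) ltac:(lia)). specialize (sel_incr j (S j) ltac:(lia)). lia.
Qed.

Lemma sel_le_inv i j : i < len -> j < len -> sel i <= sel j -> i <= j.
Proof.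
  intros Hi Hj Hle. destruct (le_lt_dec i j) as [|Hji]; [assumption|].
  specialize (sel_incr j i ltac:(lia)). lia.
Qed.

Lemma sel_zero : 0 < len /\ sel 0 = 0.
Proof.
  destruct (supp_sel 0 Hf0) as [i [Hi Hsel]].
  pose proof (sel_gap 0 i ltac:(lia)). split; lia.
Qed.

Lemma sel_full : k < len -> forall a, a <= k -> 1 <= f a.
Proof.
  intros Hk a Ha. pose proof (sel_gap 0 a ltac:(lia)). pose proof (sel_gap a k ltac:(lia)).
  pose proof (Hfk _ (sel_supp k Hk)).
  replace a with (sel a) by lia. apply sel_supp. lia.
Qed.

Definition compress (g : nat -> nat) : nat -> nat :=
  fun i => if i <? len then g (sel i) else 0.

Lemma compress_pos g i : 1 <= compress g i -> i < len /\ 1 <= g (sel i).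
Proof. unfold compress. destruct (Nat.ltb_spec i len); [auto | lia]. Qed.

Lemma compress_mdivisor g : mdivisor b g f -> mdivisor b (compress g) (intvl_b k).
Proof.
  intros Hg. destruct (mdivisor_supp_zero b f g Hb Hf0 Hg) as [Hg0 Hgf].
  destruct (mdivisor_level1 b g f Hb Hg) as [[Hgb _] [h [_ Hs]]].
  assert (Hsum : forall s t, 1 <= g s -> 1 <= h t -> s + t <= k).
  { intros s t Hgs Ht. apply Hfk, Hs. exists s, t. auto. }
  assert (Hc0 : 1 <= compress g 0).
  { destruct sel_zero as [Hlen Hsel0]. unfold compress.
    destruct (Nat.ltb_spec 0 len); [rewrite Hsel0; exact Hg0 | lia]. }
  assert (Hck : forall i, 1 <= compress g i -> i <= k).
  { intros i Hi. destruct (compress_pos g i Hi) as [Hil Hgi].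
    pose proof (sel_gap 0 i ltac:(lia)). specialize (Hfk _ (Hgf _ Hgi)). lia. }
  destruct (max_supp_spec (compress g) k Hc0) as [Hj0 Hj0max].
  set (j0 := max_supp (compress g) k) in *.
  apply mdivisor_intvl_of_cover; [exact Hb | | exact Hck |].
  - intros i. unfold compress. destruct (i <? len); [apply Hgb | lia].
  - intros x Hx. destruct (le_lt_dec j0 x).
    + exists j0, (x - j0). split; [exact Hj0|]. split; [lia|].
      intros s' Hs'. specialize (Hj0max s' Hs' (Hck s' Hs')). lia.
    + (* Write the x-th element of A as s + t in A = S + T; the rank of s does the job. *)
      assert (Hxl : x < len) by (pose proof (proj1 (compress_pos g j0 Hj0)); lia).
      destruct (proj1 (Hs (sel x)) (sel_supp x Hxl)) as [s [t [Hgs [Ht Hst]]]].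
      destruct (supp_sel s (Hgf s Hgs)) as [i [Hi <-]].
      assert (Hix : i <= x) by (apply sel_le_inv; lia).
      exists i, (x - i). split.
      { unfold compress. destruct (Nat.ltb_spec i len); [exact Hgs | lia]. }
      split; [lia|]. intros s' Hs'. destruct (compress_pos g s' Hs') as [Hs'l Hgs'].
      pose proof (sel_gap i x ltac:(lia)). pose proof (sel_gap 0 s' ltac:(lia)).
      specialize (Hsum _ _ Hgs' Ht). lia.
Qed.

Lemma compress_inj g1 g2 :
  mdivisor b g1 f -> mdivisor b g2 f -> compress g1 = compress g2 -> g1 = g2.
Proof.
  intros Hg1 Hg2 E. destruct (mdivisor_supp_zero b f g1 Hb Hf0 Hg1) as [_ Hg1f].
  destruct (mdivisor_supp_zero b f g2 Hb Hf0 Hg2) as [_ Hg2f].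
  apply functional_extensionality. intros a. destruct (le_lt_dec 1 (f a)) as [Ha|Ha].
  - destruct (supp_sel a Ha) as [i [Hi <-]]. pose proof (equal_f E i) as Ei.
    unfold compress in Ei. destruct (Nat.ltb_spec i len); [exact Ei | lia].
  - destruct (Nat.eq_dec (g1 a) 0) as [|H1]; [|specialize (Hg1f a ltac:(lia)); lia].
    destruct (Nat.eq_dec (g2 a) 0) as [|H2]; [|specialize (Hg2f a ltac:(lia)); lia].
    congruence.
Qed.

Lemma compress_eq_intvl g : compress g = intvl_b k -> f = intvl_b k.
Proof.
  intros E. assert (Hk : 1 <= compress g k) by (rewrite E; apply intvl_b_pos; lia).
  destruct (compress_pos g k Hk) as [Hkl _].
  apply functional_extensionality. intros a. unfold intvl_b.
  destruct (Nat.leb_spec a k) as [Ha|Ha].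
  - specialize (sel_full Hkl a Ha). specialize (Hf01 a). lia.
  - destruct (Nat.eq_dec (f a) 0) as [|Hfa]; [assumption|]. specialize (Hfk a). lia.
Qed.

Lemma num_divisors_le_intvl_compress n m :
  num_divisors_is b f n -> num_divisors_is b (intvl_b k) m ->
  n <= m /\ (f <> intvl_b k -> n < m).
Proof.
  intros Hn Hm. split.
  - exact (has_card_le_inj _ _ _ _ compress compress_mdivisor compress_inj n m Hn Hm).
  - intros Hne.
    apply (has_card_lt_inj _ _ _ _ compress compress_mdivisor compress_inj n m Hn Hm).
    exists (intvl_b k). split.
    + apply mdivisor_intvl_of_cover; [exact Hb | | intros a; apply intvl_b_pos |].
      * intros a. pose proof (intvl_b_le1 k a). lia.
      * intros x Hx. exists x, 0. split; [apply intvl_b_pos; exact Hx|]. split; [lia|].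
        intros s' Hs'. rewrite intvl_b_pos in Hs'. lia.
    + intros g _ E. exact (Hne (compress_eq_intvl g E)).
Qed.

End RankCompression.

Lemma num_divisors_intvl_exists b k : 1 <= b -> exists m, num_divisors_is b (intvl_b k) m.
Proof.
  intros Hb. apply (num_divisors_exists b _ k Hb); [intros a; apply intvl_b_pos|].
  exists 0. apply intvl_b_pos. lia.
Qed.

Lemma num_divisors_le_intvl_zero b k f n m :
  1 <= b -> (forall a, f a <= 1) -> (forall a, 1 <= f a -> a <= k) -> 1 <= f 0 ->
  num_divisors_is b f n -> num_divisors_is b (intvl_b k) m ->
  n <= m /\ (f <> intvl_b k -> n < m).
Proof.
  intros Hb Hf01 Hfk Hf0.
  destruct (increasing_enum (fun a => 1 <=? f a) (S k)) as [len [sel [Hincr [Hsel Hcov]]]].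
  apply (num_divisors_le_intvl_compress b k len f sel Hb Hf01 Hfk Hf0 Hincr).
  - intros i Hi. apply Nat.leb_le, (Hsel i Hi).
  - intros a Ha. apply Hcov; [specialize (Hfk a Ha); lia | apply Nat.leb_le, Ha].
Qed.

Lemma num_divisors_le_intvl b k f n m :
  2 <= b -> (forall a, f a <= 1) -> (forall a, 1 <= f a -> a <= k) -> (exists a, 1 <= f a) ->
  num_divisors_is b f n -> num_divisors_is b (intvl_b k) m ->
  n <= m /\ (f <> intvl_b k -> n < m).
Proof.
  intros Hb. revert f n m.
  induction k as [|k IH]; intros f n m Hf01 Hfk Hne Hn Hm;
    (destruct (le_lt_dec 1 (f 0)) as [Hf0|Hf0];
     [apply (num_divisors_le_intvl_zero b _ f); auto; lia|]).
  - exfalso. destruct Hne as [a Ha]. specialize (Hfk a Ha).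
    assert (a = 0) by lia. subst. lia.
  - set (f' := fun a => f (S a)).
    assert (Hf'01 : forall a, f' a <= 1) by (intros a; apply Hf01).
    assert (Hf'k : forall a, 1 <= f' a -> a <= k) by (intros a Ha; specialize (Hfk _ Ha); lia).
    assert (Hf'ne : exists a, 1 <= f' a) by (destruct Hne as [[|a] Ha]; [lia | exists a; exact Ha]).
    destruct (num_divisors_exists b f' k ltac:(lia) Hf'k Hf'ne) as [n' Hn'].
    destruct (num_divisors_intvl_exists b k ltac:(lia)) as [m' Hm'].
    destruct (IH f' n' m' Hf'01 Hf'k Hf'ne Hn' Hm') as [Hle _].
    pose proof (num_divisors_le_double_shift b f n n' ltac:(lia) Hf01 ltac:(lia) Hn Hn').
    pose proof (num_divisors_intvl_S b k m' m Hb Hm' Hm).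
    split; [lia | intros _; lia].
Qed.

Theorem mainTheorem13 (b k : nat) (f : nat -> nat) :
  2 <= b ->
  (* f has set-array representation (A, empty, ..., empty) *)
  (forall a, f a <= 1) ->
  (* A = {a | f a >= 1} is a subset of {0,...,k} *)
  (forall a, 1 <= f a -> a <= k) ->
  (* A is nonempty *)
  (exists a, 1 <= f a) ->
  exists n m : nat,
    num_divisors_is b f n /\ num_divisors_is b (intvl_b k) m /\
    n <= m /\ (f <> intvl_b k -> n < m).
Proof.
  intros Hb Hf01 Hfk Hne.
  destruct (num_divisors_exists b f k ltac:(lia) Hfk Hne) as [n Hn].
  destruct (num_divisors_intvl_exists b k ltac:(lia)) as [m Hm].
  exists n, m. split; [exact Hn|]. split; [exact Hm|].
  exact (num_divisors_le_intvl b k f n m Hb Hf01 Hfk Hne Hn Hm).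
Qed.
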